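(* Let $a_1,a_2,a_3,a_4>0$ satisfy $4a_2a_4>(a_1+a_3)^2$, let $z_0>0$, set $y_0=z_0a_1/a_2$ and $\beta=\frac12\sqrt{4a_2a_4-(a_1+a_3)^2}\in\mathbb{R}$. For $y'\in[0,y_0)$ let $\tau\mapsto(z(\tau,y'),y(\tau,y'))$ be the solution of $\dot z=a_1z-a_2y$, $\dot y=a_4z-a_3y$ with $(z(0),y(0))=(z_0,y')$, explicitly $$z(\tau,y')=e^{\frac{a_1-a_3}{2}\tau}\Big(z_0\cos\beta\tau+\Big(z_0\frac{a_1+a_3}{2\beta}-\frac{y'a_2}{\beta}\Big)\sin\beta\tau\Big),$$ $$y(\tau,y')=e^{\frac{a_1-a_3}{2}\tau}\Big(y'\cos\beta\tau+\Big(\frac{a_4z_0}{\beta}-y'\frac{a_1+a_3}{2\beta}\Big)\sin\beta\tau\Big).$$ Then for each $y'\in[0,y_0)$ there exist a unique $y^+=y^+(y')>y_0$ and a minimal $\tau_1=\tau_1(y')>0$ such that $z(\tau_1,y')=z_0$ and $y(\tau_1,y')=y^+$ (i.e. $\tau_1$ is the first positive time at which the trajectory from $(z_0,y')$ reaches the half-line $\{(z_0,y):y>y_0\}$). Moreover, $\tau_1$ does not depend on $z_0$: writing $y'=\alpha y_0$ with $\alpha$ fixed, $\tau_1$ is determined by $a_1,\dots,a_4,\alpha$ alone.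
   Context: This describes the within-host dynamics of an infected host with viral load $z\ge z_0$ ($z_0$ the minimum detectable viral load) and antibody level $y\ge0$. The time $\tau_1(y')$ is interpreted as the time an infected individual entering the infected compartment with antibody level $y'$ remains infected before transitioning to the recovered compartment. *)

From Stdlib Require Import Reals.
Open Scope R_scope.

Definition y0 (a1 a2 z0 : R) : R := z0 * a1 / a2.

Definition beta (a1 a2 a3 a4 : R) : R :=
  / 2 * sqrt (4 * a2 * a4 - (a1 + a3) ^ 2).

(* explicit solution of z' = a1 z - a2 y, y' = a4 z - a3 y, (z,y)(0) = (z0,y') *)
Definition zsol (a1 a2 a3 a4 z0 y' tau : R) : R :=
  let b := beta a1 a2 a3 a4 in
  exp ((a1 - a3) / 2 * tau) *
  (z0 * cos (b * tau) + (z0 * (a1 + a3) / (2 * b) - y' * a2 / b) * sin (b * tau)).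

Definition ysol (a1 a2 a3 a4 z0 y' tau : R) : R :=
  let b := beta a1 a2 a3 a4 in
  exp ((a1 - a3) / 2 * tau) *
  (y' * cos (b * tau) + (a4 * z0 / b - y' * (a1 + a3) / (2 * b)) * sin (b * tau)).

Definition first_hit (a1 a2 a3 a4 z0 y' tau1 yplus : R) : Prop :=
  0 < tau1 /\
  zsol a1 a2 a3 a4 z0 y' tau1 = z0 /\
  ysol a1 a2 a3 a4 z0 y' tau1 = yplus /\
  yplus > y0 a1 a2 z0 /\
  (forall t, 0 < t < tau1 ->
     ~ (zsol a1 a2 a3 a4 z0 y' t = z0 /\ ysol a1 a2 a3 a4 z0 y' t > y0 a1 a2 z0)).

(** The trajectory leaves (z0, y') moving right, since z' = a1 z0 - a2 y' > 0
    for y' < y0, and after half a period pi / beta it lies left of z = z0.  So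
    there is a first return time tau1 to the line z = z0, approached from the
    right.  There z' <= 0, i.e. y >= y0, and y = y0 is excluded because then
    z' = 0 and z'' = -a2 (a4 z0 - a3 y0) < 0 would make z0 a strict local
    maximum.  Minimality makes tau1 and y(tau1) unique, and since the system is
    linear, scaling (z0, y') scales the trajectory and leaves tau1 unchanged. *)

From Stdlib Require Import Reals Lra Psatz Classical.
From Coquelicot Require Import Coquelicot.
Open Scope R_scope.

Lemma continuity_pt_pos_locally (f : R -> R) x :
  continuity_pt f x -> 0 < f x ->
  exists e, 0 < e /\ forall y, Rabs (y - x) < e -> 0 < f y.
Proof.
  intros Hc Hfx.
  destruct (Hc (f x) Hfx) as [e [He Hfe]].
  exists e; split; [exact He |].
  intros y Hy.
  destruct (Req_dec y x) as [-> | Hyx]; [exact Hfx |].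
  assert (Hfy : Rabs (f y - f x) < f x)
    by (apply (Hfe y); split; [split; [exact I | congruence] | exact Hy]).
  apply Rabs_def2 in Hfy; lra.
Qed.

Lemma derivable_pt_lim_pos_locally_increasing (f : R -> R) x l :
  derivable_pt_lim f x l -> 0 < l ->
  exists d, 0 < d /\
    (forall s, x - d < s < x -> f s < f x) /\
    (forall s, x < s < x + d -> f x < f s).
Proof.
  intros Hd Hl.
  destruct (Hd (l / 2) ltac:(lra)) as [[d Hd0] Hquot]; simpl in Hquot.
  assert (Hslope : forall s, s <> x -> Rabs (s - x) < d -> 0 < (f s - f x) * (s - x)).
  { intros s Hsx Hs.
    specialize (Hquot (s - x) ltac:(lra)).
    replace (x + (s - x)) with s in Hquot by ring.
    destruct (Rabs_def2 _ _ (Hquot Hs)) as [_ Hlo].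
    assert (Hpos : 0 < (f s - f x) / (s - x)) by lra.
    replace ((f s - f x) * (s - x)) with ((f s - f x) / (s - x) * (s - x) ^ 2)
      by (field; lra).
    apply Rmult_lt_0_compat; [exact Hpos | apply pow2_gt_0; lra]. }
  exists d; split; [exact Hd0 | split]; intros s Hs.
  - specialize (Hslope s ltac:(lra) ltac:(rewrite Rabs_left; lra)); nra.
  - specialize (Hslope s ltac:(lra) ltac:(rewrite Rabs_right; lra)); nra.
Qed.

Lemma critical_concave_left_below (f f' : R -> R) x f'' :
  (forall y, derivable_pt_lim f y (f' y)) ->
  derivable_pt_lim f' x f'' -> f' x = 0 -> f'' < 0 ->
  exists d, 0 < d /\ forall s, x - d < s < x -> f s < f x.
Proof.
  intros Hf Hf' Hcrit Hconc.
  destruct (derivable_pt_lim_pos_locally_increasing (fun y => - f' y) x (- f''))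
    as [d [Hd [Hleft _]]].
  { apply derivable_pt_lim_opp; exact Hf'. }
  { lra. }
  exists d; split; [exact Hd |]; intros s Hs.
  destruct (MVT_cor2 f f' s x ltac:(lra) (fun c _ => Hf c)) as [c [Hmvt Hc]].
  specialize (Hleft c ltac:(lra)); simpl in Hleft.
  nra.
Qed.

Lemma first_zero (f : R -> R) T :
  0 < T -> (forall x, continuity_pt f x) -> f T < 0 ->
  (exists d, 0 < d /\ forall s, 0 < s < d -> 0 < f s) ->
  exists t, 0 < t <= T /\ f t = 0 /\ forall s, 0 < s < t -> 0 < f s.
Proof.
  intros HT Hc HfT [d [Hd Hpos]].
  set (E := fun t => forall s, 0 < s <= t -> 0 < f s).
  assert (HE_down : forall u v, u <= v -> E v -> E u)
    by (intros u v Huv Hv s Hs; apply Hv; lra).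
  assert (HE_d : E (d / 2)) by (intros s Hs; apply Hpos; lra).
  assert (HE_T : forall t, E t -> t < T).
  { intros t Ht. destruct (Rlt_or_le t T) as [| HTt]; [assumption |].
    specialize (Ht T ltac:(lra)); lra. }
  destruct (completeness E) as [t [Hub Hlub]].
  { exists T; intros u Hu; left; apply HE_T, Hu. }
  { exists (d / 2); exact HE_d. }
  assert (Ht_pos : d / 2 <= t) by (apply Hub, HE_d).
  assert (Ht_T : t <= T) by (apply Hlub; intros u Hu; left; apply HE_T, Hu).
  assert (Hbelow : forall s, 0 < s < t -> 0 < f s).
  { intros s Hs. destruct (classic (E s)) as [HEs | HnEs]; [apply HEs; lra |].
    enough (t <= s) by lra.
    apply Hlub; intros u Hu.
    destruct (Rle_or_lt u s) as [| Hsu]; [assumption |].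
    exfalso; apply HnEs, (HE_down s u); [lra | exact Hu]. }
  exists t; split; [lra | split; [| exact Hbelow]].
  destruct (Rtotal_order (f t) 0) as [Hneg | [Hzero | Hposit]]; [exfalso | exact Hzero | exfalso].
  - destruct (continuity_pt_pos_locally (- f)%F t) as [e [He Hnear]].
    { apply continuity_pt_opp, Hc. }
    { unfold opp_fct; lra. }
    set (s := Rmax (t - e / 2) (t / 2)).
    assert (Hs1 : t - e / 2 <= s) by apply Rmax_l.
    assert (Hs2 : t / 2 <= s) by apply Rmax_r.
    assert (Hs3 : s < t) by (apply Rmax_lub_lt; lra).
    specialize (Hnear s ltac:(rewrite Rabs_left; lra)); unfold opp_fct in Hnear.
    specialize (Hbelow s ltac:(lra)); lra.
  - destruct (continuity_pt_pos_locally f t (Hc t) Hposit) as [e [He Hnear]].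
    enough (E (t + e / 2)) by (specialize (Hub _ H); lra).
    intros s Hs. destruct (Rlt_or_le s t) as [Hst | Hts].
    + apply Hbelow; lra.
    + apply Hnear. rewrite Rabs_right; lra.
Qed.

Lemma zsol_0 a1 a2 a3 a4 z0 y' : zsol a1 a2 a3 a4 z0 y' 0 = z0.
Proof. unfold zsol. rewrite !Rmult_0_r, exp_0, cos_0, sin_0. ring. Qed.

Lemma ysol_0 a1 a2 a3 a4 z0 y' : ysol a1 a2 a3 a4 z0 y' 0 = y'.
Proof. unfold ysol. rewrite !Rmult_0_r, exp_0, cos_0, sin_0. ring. Qed.

Lemma zsol_scale a1 a2 a3 a4 z0 y' k t :
  zsol a1 a2 a3 a4 (k * z0) (k * y') t = k * zsol a1 a2 a3 a4 z0 y' t.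
Proof. unfold zsol; cbv zeta; unfold Rdiv; ring. Qed.

Lemma ysol_scale a1 a2 a3 a4 z0 y' k t :
  ysol a1 a2 a3 a4 (k * z0) (k * y') t = k * ysol a1 a2 a3 a4 z0 y' t.
Proof. unfold ysol; cbv zeta; unfold Rdiv; ring. Qed.

Lemma first_hit_scale a1 a2 a3 a4 z0 y' t yp k : 0 < k ->
  first_hit a1 a2 a3 a4 z0 y' t yp ->
  first_hit a1 a2 a3 a4 (k * z0) (k * y') t (k * yp).
Proof.
  intros Hk [Ht [Hz [Hy [Hyp Hmin]]]].
  assert (Hy0 : y0 a1 a2 (k * z0) = k * y0 a1 a2 z0) by (unfold y0, Rdiv; ring).
  unfold first_hit; rewrite !zsol_scale, !ysol_scale, Hy0, Hz, Hy.
  repeat split; [exact Ht | apply Rmult_lt_compat_l; assumption |].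
  intros s Hs [Hzs Hys].
  rewrite zsol_scale in Hzs; rewrite ysol_scale in Hys.
  apply (Hmin s Hs); split.
  - apply (Rmult_eq_reg_l k); [exact Hzs | lra].
  - apply (Rmult_lt_reg_l k); assumption.
Qed.

Lemma first_hit_unique a1 a2 a3 a4 z0 y' t1 t2 yp1 yp2 :
  first_hit a1 a2 a3 a4 z0 y' t1 yp1 -> first_hit a1 a2 a3 a4 z0 y' t2 yp2 ->
  t1 = t2 /\ yp1 = yp2.
Proof.
  intros [Ht1 [Hz1 [Hy1 [Hyp1 Hmin1]]]] [Ht2 [Hz2 [Hy2 [Hyp2 Hmin2]]]].
  assert (Ht : t1 = t2).
  { destruct (Rtotal_order t1 t2) as [Hlt | [Heq | Hgt]]; [exfalso | exact Heq | exfalso].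
    - apply (Hmin2 t1); [lra | split; [exact Hz1 | lra]].
    - apply (Hmin1 t2); [lra | split; [exact Hz2 | lra]]. }
  subst t2; split; [reflexivity | congruence].
Qed.

Section Trajectory.

Variables a1 a2 a3 a4 : R.
Hypothesis Ha2 : 0 < a2.
Hypothesis Hdisc : 4 * a2 * a4 > (a1 + a3) ^ 2.

Let Z := zsol a1 a2 a3 a4.
Let Y := ysol a1 a2 a3 a4.

Lemma beta_pos : 0 < beta a1 a2 a3 a4.
Proof. unfold beta. apply Rmult_lt_0_compat; [lra | apply sqrt_lt_R0; lra]. Qed.

Lemma beta_sqr : beta a1 a2 a3 a4 ^ 2 = a2 * a4 - ((a1 + a3) / 2) ^ 2.
Proof.
  unfold beta. rewrite Rpow_mult_distr, pow2_sqrt by lra. field.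
Qed.

(* With beta > 0 and a4 = (beta^2 + ((a1 + a3)/2)^2) / a2, both derivative
   identities become identities of rational functions. *)
Ltac solve_solution_derive :=
  apply is_derive_Reals; unfold zsol, ysol; cbv zeta;
  pose proof beta_pos as Hb; pose proof beta_sqr as Hbb;
  set (b := beta a1 a2 a3 a4) in *; clearbody b;
  auto_derive; [exact I |];
  replace a4 with ((b ^ 2 + ((a1 + a3) / 2) ^ 2) / a2) by (rewrite Hbb; field; lra);
  field; lra.

Lemma zsol_derive z0 y' t :
  derivable_pt_lim (Z z0 y') t (a1 * Z z0 y' t - a2 * Y z0 y' t).
Proof. unfold Z, Y. solve_solution_derive. Qed.

Lemma ysol_derive z0 y' t :
  derivable_pt_lim (Y z0 y') t (a4 * Z z0 y' t - a3 * Y z0 y' t).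
Proof. unfold Z, Y. solve_solution_derive. Qed.

Lemma zsol_half_period_lt z0 y' : 0 < z0 -> Z z0 y' (PI / beta a1 a2 a3 a4) < z0.
Proof.
  intros Hz. pose proof beta_pos as Hb. unfold Z, zsol; cbv zeta.
  replace (beta a1 a2 a3 a4 * (PI / beta a1 a2 a3 a4)) with PI by (field; lra).
  rewrite cos_PI, sin_PI.
  pose proof (exp_pos ((a1 - a3) / 2 * (PI / beta a1 a2 a3 a4))). nra.
Qed.

Lemma zsol_first_return z0 y' : 0 < z0 -> y' < y0 a1 a2 z0 ->
  exists t, 0 < t /\ Z z0 y' t = z0 /\ forall s, 0 < s < t -> z0 < Z z0 y' s.
Proof.
  intros Hz Hy. unfold y0 in Hy.
  assert (Hslope0 : 0 < a1 * Z z0 y' 0 - a2 * Y z0 y' 0).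
  { unfold Z, Y; rewrite zsol_0, ysol_0.
    apply (Rmult_lt_compat_l a2) in Hy; [| exact Ha2].
    replace (a2 * (z0 * a1 / a2)) with (a1 * z0) in Hy by (field; lra). lra. }
  set (f := fun t => Z z0 y' t - z0).
  destruct (first_zero f (PI / beta a1 a2 a3 a4)) as [t [Ht [Hft Hpos]]].
  - apply Rdiv_lt_0_compat; [apply PI_RGT_0 | apply beta_pos].
  - intro x. apply derivable_continuous_pt.
    exists (a1 * Z z0 y' x - a2 * Y z0 y' x - 0).
    apply derivable_pt_lim_minus; [apply zsol_derive | apply derivable_pt_lim_const].
  - unfold f. pose proof (zsol_half_period_lt z0 y' Hz). lra.
  - destruct (derivable_pt_lim_pos_locally_increasing _ _ _ (zsol_derive z0 y' 0) Hslope0)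
      as [d [Hd [_ Hright]]].
    exists d; split; [exact Hd |]; intros s Hs.
    specialize (Hright s ltac:(lra)). unfold f, Z in *; rewrite zsol_0 in Hright. lra.
  - exists t; unfold f in *; split; [lra | split; [lra |]].
    intros s Hs; specialize (Hpos s Hs); lra.
Qed.

Lemma ysol_gt_y0_at_first_return z0 y' t : 0 < z0 -> 0 < t -> Z z0 y' t = z0 ->
  (forall s, 0 < s < t -> z0 < Z z0 y' s) -> y0 a1 a2 z0 < Y z0 y' t.
Proof.
  intros Hz Ht Hzt Habove.
  assert (Ha2y0 : a2 * y0 a1 a2 z0 = a1 * z0) by (unfold y0; field; lra).
  destruct (Rlt_or_le (y0 a1 a2 z0) (Y z0 y' t)) as [| Hle]; [assumption | exfalso].
  assert (Hleft_below :
    exists d, 0 < d /\ forall s, t - d < s < t -> Z z0 y' s < Z z0 y' t).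
  { destruct Hle as [Hlt | Heq].
    - destruct (derivable_pt_lim_pos_locally_increasing _ _ _ (zsol_derive z0 y' t))
        as [d [Hd [Hleft _]]]; [nra | exists d; auto].
      apply (critical_concave_left_below _ (fun s => a1 * Z z0 y' s - a2 * Y z0 y' s) t
               (a1 * (a1 * Z z0 y' t - a2 * Y z0 y' t) - a2 * (a4 * Z z0 y' t - a3 * Y z0 y' t))).
      + apply zsol_derive.
      + apply derivable_pt_lim_minus; apply derivable_pt_lim_scal;
          [apply zsol_derive | apply ysol_derive].
      + rewrite Hzt, Heq; lra.
      + rewrite Hzt, Heq.
        assert (Hdet : a1 * a3 < a2 * a4) by (pose proof (pow2_ge_0 (a1 - a3)); nra).
        replace (a1 * (a1 * z0 - a2 * y0 a1 a2 z0) - a2 * (a4 * z0 - a3 * y0 a1 a2 z0))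
          with (- z0 * (a2 * a4 - a1 * a3))
          by (transitivity ((a1 - a3) * (a1 * z0 - a2 * y0 a1 a2 z0) - z0 * (a2 * a4 - a1 * a3));
              [rewrite Ha2y0; ring | ring]).
        nra. }
  destruct Hleft_below as [d [Hd Hbelow]].
  set (s := Rmax (t - d / 2) (t / 2)).
  assert (Hs1 : t - d / 2 <= s) by apply Rmax_l.
  assert (Hs2 : t / 2 <= s) by apply Rmax_r.
  assert (Hs3 : s < t) by (apply Rmax_lub_lt; lra).
  specialize (Hbelow s ltac:(lra)). specialize (Habove s ltac:(lra)). rewrite Hzt in Hbelow. lra.
Qed.

Lemma exists_first_hit z0 y' : 0 < z0 -> y' < y0 a1 a2 z0 ->
  exists t, first_hit a1 a2 a3 a4 z0 y' t (Y z0 y' t).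
Proof.
  intros Hz Hy.
  destruct (zsol_first_return z0 y' Hz Hy) as [t [Ht [Hzt Habove]]].
  exists t; repeat split; [exact Ht | exact Hzt | |].
  - apply ysol_gt_y0_at_first_return; assumption.
  - intros s Hs [Hzs _]. specialize (Habove s Hs). fold Z in Hzs. lra.
Qed.

End Trajectory.

Theorem proposition1 (a1 a2 a3 a4 : R) :
  0 < a1 -> 0 < a2 -> 0 < a3 -> 0 < a4 ->
  4 * a2 * a4 > (a1 + a3) ^ 2 ->
  (* existence and uniqueness of (tau1, y+) for every z0 > 0, y' in [0, y0) *)
  (forall z0 y', 0 < z0 -> 0 <= y' < y0 a1 a2 z0 ->
     exists tau1 yplus,
       first_hit a1 a2 a3 a4 z0 y' tau1 yplus /\
       (forall tau yp, first_hit a1 a2 a3 a4 z0 y' tau yp ->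
          tau = tau1 /\ yp = yplus)) /\
  (* tau1 does not depend on z0 once y' = alpha * y0 with alpha fixed *)
  (forall alpha z0 z0' tau tau' yp yp',
     0 <= alpha < 1 -> 0 < z0 -> 0 < z0' ->
     first_hit a1 a2 a3 a4 z0 (alpha * y0 a1 a2 z0) tau yp ->
     first_hit a1 a2 a3 a4 z0' (alpha * y0 a1 a2 z0') tau' yp' ->
     tau = tau').
Proof.
  intros _ Ha2 _ _ Hdisc. split.
  - intros z0 y' Hz [_ Hy].
    destruct (exists_first_hit a1 a2 a3 a4 Ha2 Hdisc z0 y' Hz Hy) as [t Ht].
    exists t, (ysol a1 a2 a3 a4 z0 y' t); split; [exact Ht |].
    intros tau yp Hhit; exact (first_hit_unique _ _ _ _ _ _ _ _ _ _ Hhit Ht).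
  - intros alpha z0 z0' tau tau' yp yp' _ Hz Hz' Hhit Hhit'.
    assert (Hk : 0 < z0 / z0') by (apply Rdiv_lt_0_compat; assumption).
    pose proof (first_hit_scale _ _ _ _ _ _ _ _ _ Hk Hhit') as Hscaled.
    replace (z0 / z0' * z0') with z0 in Hscaled by (field; lra).
    replace (z0 / z0' * (alpha * y0 a1 a2 z0')) with (alpha * y0 a1 a2 z0) in Hscaled
      by (unfold y0; field; lra).
    exact (proj1 (first_hit_unique _ _ _ _ _ _ _ _ _ _ Hhit Hscaled)).
Qed.
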